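(* Every finitely generated countable profinite completely regular semigroup is finite.
   Context: A profinite semigroup is a compact (Hausdorff) topological semigroup that is residually finite, i.e. any two distinct elements are separated by a continuous homomorphism onto a finite discrete semigroup. It is finitely generated if some finite subset generates a dense subsemigroup. A semigroup is completely regular if each of its elements lies in a subgroup. *)

From mathcomp Require Import all_boot all_order.
From mathcomp Require Import all_classical all_reals all_analysis.
Set Implicit Arguments. Unset Strict Implicit. Unset Printing Implicit Defensive.
Local Open Scope classical_set_scope.

Section Semigroups.
Variables (S : topologicalType) (mul : S -> S -> S).

Inductive gen_subsemigroup (A : set S) : S -> Prop :=
| gen_base x : A x -> gen_subsemigroup A x
| gen_mul x y : gen_subsemigroup A x -> gen_subsemigroup A y ->
                gen_subsemigroup A (mul x y).

Definition compact_topological_semigroup : Prop :=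
  [/\ associative mul,
      continuous (fun p : S * S => mul p.1 p.2),
      compact [set: S] & hausdorff_space S].

Definition finite_quotient_separating (x y : S) : Prop :=
  exists (F : finType) (op : F -> F -> F) (phi : S -> F),
    [/\ associative op,
        (forall a b, phi (mul a b) = op (phi a) (phi b)),
        (forall t : F, open (phi @^-1` [set t])),  (* continuity into discrete F *)
        (forall t : F, exists a, phi a = t)
      & phi x <> phi y].

Definition residually_finite : Prop :=
  forall x y : S, x <> y -> finite_quotient_separating x y.

Definition profinite_semigroup : Prop :=
  compact_topological_semigroup /\ residually_finite.

Definition finitely_generated : Prop :=
  exists A : set S, finite_set A /\ closure (gen_subsemigroup A) = [set: S].

Definition is_subgroup (G : set S) : Prop :=
  (forall a b, G a -> G b -> G (mul a b)) /\
  exists e, [/\ G e, (forall g, G g -> mul e g = g /\ mul g e = g)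
              & (forall g, G g -> exists h, [/\ G h, mul g h = e & mul h g = e])].

Definition completely_regular : Prop :=
  forall x : S, exists G : set S, is_subgroup G /\ G x.

End Semigroups.

(* Algebraically, if all H-classes are finite then so is every finitely generated
   subsemigroup: by induction on the generators, an element not generated by fewer
   of them is J-below all generators, so its R-class and L-class are those of its
   shortest prefix and suffix avoiding the finite part generated by fewer
   generators; this leaves finitely many H-classes.
   Topologically, residual finiteness makes S zero-dimensional, an H-class is
   closed hence compact, and in a countable compact zero-dimensional space every
   nonempty closed set has an isolated point; left translations act transitively
   on an H-class, so all its points are isolated and it is finite.
   The dense finitely generated subsemigroup is thus finite, hence closed, hence
   all of S. *)

From mathcomp Require Import all_boot all_order finmap.
From mathcomp Require Import all_classical all_reals all_analysis.
Set Implicit Arguments. Unset Strict Implicit. Unset Printing Implicit Defensive.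
Local Open Scope classical_set_scope.

Section GreenRelations.
Variables (S : topologicalType) (mul : S -> S -> S).

Definition leR x y := exists v, x = mul y v.
Definition leL x y := exists u, x = mul u y.
Definition leJ x y := exists u v, x = mul u (mul y v).
Definition H_class t := [set y | [/\ leR y t, leR t y, leL y t & leL t y]].
Definition J_lbound (C : set S) q := forall c, C c -> leJ q c.

Local Notation gen := (gen_subsemigroup mul).

Hypothesis mulA : associative mul.

Lemma gen_subsemigroup_ind_r (C : set S) (P : S -> Prop) :
    (forall c, C c -> P c) ->
    (forall s c, gen C s -> P s -> C c -> P (mul s c)) ->
  forall t, gen C t -> P t.
Proof.
move=> Pbase Pmul t gt.
suff : P t /\ forall s, gen C s -> P s -> P (mul s t) by case.
elim: gt => [c Cc|x y gx [Px Px_mul] gy [Py Py_mul]].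
  by split; [exact: Pbase|move=> s gs Ps; exact: Pmul].
split=> [|s gs Ps]; first exact: Py_mul.
by rewrite mulA; apply: Py_mul (Px_mul _ gs Ps); exact: gen_mul.
Qed.

Lemma gen_lbound_prefix (C U : set S) :
    (forall x, gen C x -> J_lbound C x \/ U x) ->
  forall t, gen C t -> U t \/ exists q,
    [/\ (C `|` [set mul u c | u in U & c in C]) q, J_lbound C q & (t = q \/ leR t q)].
Proof.
move=> lbound_or_U t gt.
suff : gen C t /\ (U t \/ exists q, [/\ (C `|` [set mul u c | u in U & c in C]) q,
    J_lbound C q & (t = q \/ leR t q)]) by case.
elim/gen_subsemigroup_ind_r: t / gt => [c Cc|s c gs [_ IH] Cc].
  split; first exact: gen_base.
  have [lbc|Uc] := lbound_or_U c (gen_base _ Cc); last by left.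
  by right; exists c; split=> //; left.
have gsc : gen C (mul s c) by apply: gen_mul => //; exact: gen_base.
split=> //; case: IH => [Us|[q [Qq lbq sq]]].
  have [lbsc|] := lbound_or_U _ gsc; last by left.
  by right; exists (mul s c); split=> //; [right; exists s => //; exists c|left].
right; exists q; split=> //; right.
by case: sq => [->|[v ->]]; [exists c|exists (mul v c); rewrite mulA].
Qed.

End GreenRelations.

Section Opposite.
Variables (S : topologicalType) (mul : S -> S -> S).

Definition op_mul x y := mul y x.

Lemma gen_subsemigroup_op (C : set S) :
  gen_subsemigroup op_mul C = gen_subsemigroup mul C.
Proof.
apply/seteqP; split=> t; elim=> [c|x y _ gx _ gy];
  by [apply: gen_base|apply: gen_mul].
Qed.

Hypothesis mulA : associative mul.

Lemma op_mulA : associative op_mul.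
Proof. by move=> x y z; rewrite /op_mul mulA. Qed.

Lemma J_lbound_op (C : set S) q : J_lbound op_mul C q <-> J_lbound mul C q.
Proof.
by split=> lbq c Cc; have [u [v ->]] := lbq c Cc; exists v, u; rewrite /op_mul mulA.
Qed.

Lemma gen_lbound_suffix (C U : set S) :
    (forall x, gen_subsemigroup mul C x -> J_lbound mul C x \/ U x) ->
  forall t, gen_subsemigroup mul C t -> U t \/ exists r,
    [/\ (C `|` [set mul c u | u in U & c in C]) r, J_lbound mul C r
       & (t = r \/ leL mul t r)].
Proof.
move=> lbound_or_U t; rewrite -gen_subsemigroup_op => gt.
have lbound_or_U_op x : gen_subsemigroup op_mul C x -> J_lbound op_mul C x \/ U x.
  by rewrite gen_subsemigroup_op J_lbound_op; exact: lbound_or_U.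
have [|[r [Qr /J_lbound_op lbr tr]]] := gen_lbound_prefix op_mulA lbound_or_U_op gt.
  by left.
by right; exists r.
Qed.

End Opposite.

Definition local_units (S : Type) (mul : S -> S -> S) (e inv : S -> S) :=
  forall x, [/\ mul x (e x) = x, mul (e x) x = x,
                mul x (inv x) = e x & mul (inv x) x = e x].

Section CompletelyRegular.
Variables (S : topologicalType) (mul : S -> S -> S) (e inv : S -> S).
Hypotheses (mulA : associative mul) (units : local_units mul e inv).

Let mulxe x : mul x (e x) = x. Proof. by case: (units x). Qed.
Let mulex x : mul (e x) x = x. Proof. by case: (units x). Qed.
Let mulxV x : mul x (inv x) = e x. Proof. by case: (units x). Qed.
Let mulVx x : mul (inv x) x = e x. Proof. by case: (units x). Qed.

Local Notation leR := (leR mul).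
Local Notation leL := (leL mul).
Local Notation leJ := (leJ mul).
Local Notation H_class := (H_class mul).
Local Notation J_lbound := (J_lbound mul).
Local Notation gen := (gen_subsemigroup mul).

Lemma leR_refl x : leR x x. Proof. by exists (e x). Qed.
Lemma leL_refl x : leL x x. Proof. by exists (e x). Qed.
Lemma H_class_refl t : H_class t t.
Proof. by split; [exact: leR_refl|exact: leR_refl|exact: leL_refl|exact: leL_refl]. Qed.

Lemma leJ_refl x : leJ x x. Proof. by exists (e x), (e x); rewrite mulxe mulex. Qed.

Lemma leR_trans y x z : leR x y -> leR y z -> leR x z.
Proof. by move=> [v ->] [w ->]; exists (mul w v); rewrite mulA. Qed.

Lemma leL_trans y x z : leL x y -> leL y z -> leL x z.
Proof. by move=> [u ->] [w ->]; exists (mul u w); rewrite mulA. Qed.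

Lemma leJ_trans y x z : leJ x y -> leJ y z -> leJ x z.
Proof.
by move=> [u [v ->]] [u' [v' ->]]; exists (mul u u'), (mul v' v); rewrite !mulA.
Qed.

Lemma leJ_mulr x y z : leJ x y -> leJ (mul x z) y.
Proof. by move=> [u [v ->]]; exists u, (mul v z); rewrite !mulA. Qed.

Lemma leJ_mull x y z : leJ x y -> leJ (mul z x) y.
Proof. by move=> [u [v ->]]; exists (mul z u), v; rewrite !mulA. Qed.

Lemma leJ_of_square y z : leJ (mul y y) z -> leJ y z.
Proof.
move=> [u [v yyE]]; exists u, (mul v (inv y)).
by rewrite -[LHS]mulxe -mulxV mulA yyE !mulA.
Qed.

(* Via leJ_of_square, since (ba)(ba) = b(ab)a and (awb)(awb) = aw(ba)wb. *)
Lemma leJ_mul x a b : leJ x a -> leJ x b -> leJ x (mul a b).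
Proof.
move=> [u [v xE]] [u' [v' xE']].
have ba_ab : leJ (mul b a) (mul a b).
  by apply: leJ_of_square; exists b, a; rewrite !mulA.
have awb_ab w : leJ (mul a (mul w b)) (mul a b).
  apply: leJ_of_square; apply: leJ_trans ba_ab.
  by exists (mul a w), (mul w b); rewrite !mulA.
apply: leJ_of_square; apply: leJ_trans (awb_ab (mul v u')).
by exists u, v'; rewrite {1}xE {1}xE' !mulA.
Qed.

Lemma J_lbound_gen C q t : J_lbound C q -> gen C t -> leJ q t.
Proof. by move=> lbq; elim=> [c /lbq //|x y _ qx _ qy]; exact: leJ_mul. Qed.

Lemma gen_setD1_or_leJ C d t : gen C t -> gen (C `\ d) t \/ leJ t d.
Proof.
elim=> [c Cc|x y _ [gx|xd] _ [gy|yd]].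
- have [->|cd] := pselect (c = d); first by right; exact: leJ_refl.
  by left; apply: gen_base.
- by left; exact: gen_mul.
- by right; exact: leJ_mull.
- by right; exact: leJ_mulr.
- by right; exact: leJ_mulr.
Qed.

Lemma fixed_mulr_e x u z : x = mul u (mul x z) -> mul x (e z) = x.
Proof. by move=> xE; rewrite {1}xE -!mulA mulxe -xE. Qed.

Lemma fixed_mull_e x u z : x = mul (mul z x) u -> mul (e z) x = x.
Proof. by move=> xE; rewrite {1}xE !mulA mulex -xE. Qed.

Lemma leR_J_lbound C q t : J_lbound C q -> gen C t -> leR t q -> leR q t.
Proof.
move=> lbq gt [v tE]; have [u [w qE]] := J_lbound_gen lbq gt.
have /fixed_mulr_e <- : q = mul u (mul q (mul v w)) by rewrite {1}qE tE !mulA.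
by exists (mul w (inv (mul v w))); rewrite -mulxV tE !mulA.
Qed.

Lemma leL_J_lbound C r t : J_lbound C r -> gen C t -> leL t r -> leL r t.
Proof.
move=> lbr gt [v tE]; have [u [w rE]] := J_lbound_gen lbr gt.
have /fixed_mull_e <- : r = mul (mul (mul u v) r) w by rewrite {1}rE tE !mulA.
by exists (mul (inv (mul u v)) u); rewrite -mulVx tE !mulA.
Qed.

Lemma H_class_trans t y z : H_class t y -> H_class t z -> H_class y z.
Proof.
move=> [yt ty yt' ty'] [zt tz zt' tz'].
by split; [exact: leR_trans zt ty|exact: leR_trans yt tz|
           exact: leL_trans zt' ty'|exact: leL_trans yt' tz'].
Qed.

Lemma mul_e_of_leL x y : leL x y -> mul x (e y) = x.
Proof. by move=> [u ->]; rewrite -mulA mulxe. Qed.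

Lemma mul_e_of_leR x y : leR x y -> mul (e y) x = x.
Proof. by move=> [v ->]; rewrite mulA mulex. Qed.

Section Translation.
Variables (t y0 y : S).
Hypotheses (Hy0 : H_class t y0) (Hy : H_class t y).

Lemma H_transl_id : mul (mul y0 (inv y)) y = y0.
Proof.
by have [_ _ y0y _] := H_class_trans Hy Hy0; rewrite -mulA mulVx mul_e_of_leL.
Qed.

Lemma H_transl_cancel z : H_class t z ->
  mul (mul y (inv y0)) (mul (mul y0 (inv y)) z) = z.
Proof.
move=> Hz; have [_ _ yy0 _] := H_class_trans Hy0 Hy.
have [zy _ _ _] := H_class_trans Hy Hz.
by rewrite !mulA -(mulA y) mulVx mul_e_of_leL // mulxV mul_e_of_leR.
Qed.

Lemma H_transl_H_class z : H_class t z -> H_class t (mul (mul y0 (inv y)) z).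
Proof.
move=> Hz; have [y0t ty0 _ _] := Hy0; have [_ _ zt tz] := Hz.
have [yz _ _ _] := H_class_trans Hz Hy; have [_ _ y0y _] := H_class_trans Hy Hy0.
split.
- by apply: leR_trans y0t; exists (mul (inv y) z); rewrite mulA.
- apply: leR_trans ty0 _; exists (mul (inv z) y).
  by rewrite -!mulA (mulA z) mulxV mul_e_of_leR // mulVx mul_e_of_leL.
- by apply: leL_trans zt; exists (mul y0 (inv y)).
- by apply: leL_trans tz _; exists (mul y (inv y0)); rewrite H_transl_cancel.
Qed.

Lemma H_transl_inj z : H_class t z -> mul (mul y0 (inv y)) z = y0 -> z = y.
Proof.
move=> Hz zE; have [_ _ yy0 _] := H_class_trans Hy0 Hy.
by rewrite -(H_transl_cancel Hz) zE -mulA mulVx mul_e_of_leL.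
Qed.

End Translation.

Section FiniteGeneration.
Hypothesis finH : forall t, finite_set (H_class t).

Lemma finite_RL_meet q r :
  finite_set [set t | [/\ leR t q, leR q t, leL t r & leL r t]].
Proof.
set M := [set t | _]; have [->|/set0P[t0 [t0q qt0 t0r rt0]]] := eqVneq M set0.
  exact: finite_set0.
apply: sub_finite_set (finH t0) => t [tq qt tr rt].
by split; [exact: leR_trans tq qt0|exact: leR_trans t0q qt|
           exact: leL_trans tr rt0|exact: leL_trans t0r rt].
Qed.

Lemma finite_gen_subsemigroup_step C : finite_set C ->
  (forall d, C d -> finite_set (gen (C `\ d))) -> finite_set (gen C).
Proof.
move=> finC finCd; set U := \bigcup_(d in C) gen (C `\ d).
have finU : finite_set U by exact: bigcup_finite.
have lbound_or_U x : gen C x -> J_lbound C x \/ U x.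
  move=> gx; have [|/existsNP[d /not_implyP[Cd xd]]] := pselect (J_lbound C x).
    by left.
  by right; exists d => //; case: (gen_setD1_or_leJ d gx).
set Q := C `|` [set mul u c | u in U & c in C].
set Q' := C `|` [set mul c u | u in U & c in C].
have finQ : finite_set Q by rewrite finite_setU; split=> //; exact: finite_image2.
have finQ' : finite_set Q' by rewrite finite_setU; split=> //; exact: finite_image2.
(* Outside U, an element is R-equivalent to its shortest prefix outside U and
   L-equivalent to its shortest suffix outside U; these range over Q and Q'. *)
apply: (@sub_finite_set _ _ (U `|` \bigcup_(p in Q `*` Q')
    [set t | [/\ leR t p.1, leR p.1 t, leL t p.2 & leL p.2 t]])).
  move=> t gt; have [Ut|nUt] := pselect (U t); [by left|right].
  have [//|[q [Qq lbq tq]]] := gen_lbound_prefix mulA lbound_or_U gt.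
  have [//|[r [Qr lbr tr]]] := gen_lbound_suffix mulA lbound_or_U gt.
  have {}tq : leR t q by case: tq => [->|//]; exact: leR_refl.
  have {}tr : leL t r by case: tr => [->|//]; exact: leL_refl.
  exists (q, r) => //; split=> //.
    exact: leR_J_lbound gt tq.
  exact: leL_J_lbound gt tr.
rewrite finite_setU; split=> //; apply: bigcup_finite; first exact: finite_setX.
by move=> [q r] _; exact: finite_RL_meet.
Qed.

Lemma finite_gen_subsemigroup C : finite_set C -> finite_set (gen C).
Proof.
suff fin_fset n (X : {fset S}) : #|` X| = n -> finite_set (gen [set` X]).
  by move=> /finite_fsetP[X ->]; exact: (fin_fset _ _ erefl).
elim/ltn_ind: n X => n IH X sizeX.
apply: finite_gen_subsemigroup_step (finite_fset X) _ => d Xd.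
rewrite -set_fset1 -set_fsetD; apply: IH erefl.
by rewrite -sizeX (cardfsD1 d X) Xd.
Qed.

End FiniteGeneration.

End CompletelyRegular.

Lemma compact_isolated_finite (T : topologicalType) (K : set T) :
  compact K -> K `<=` isolated K -> finite_set K.
Proof.
move=> cptK isoK; apply: contrapT => infK.
pose F := filter_from [set D : set T | finite_set D] (fun D => K `\` D).
have FF : ProperFilter F.
  apply: filter_from_proper => [|D finD].
    apply: filter_from_filter => [|D1 D2 fin1 fin2].
      by exists set0; exact: finite_set0.
    exists (D1 `|` D2); first by rewrite /= finite_setU.
    by rewrite setDUr.
  apply/set0P/negP => /eqP; rewrite setD_eq0 => KD.
  exact/infK/(sub_finite_set KD).
have [x [Kx clx]] : K `&` cluster F !=set0.
  by apply: cptK; exists set0 => //; exact: finite_set0.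
have [_ [V Vx VK]] := isoK x Kx.
have [y [[Ky /= yx] Vy]] : (K `\ x) `&` V !=set0.
  by apply: clx => //; exists [set x] => //; exact: finite_set1.
by apply: yx; have : (V `&` K) y by []; rewrite VK.
Qed.

Lemma clopen_avoid (T : topologicalType) (X K : set T) (c : T) :
    zero_dimensional T -> isolated X = set0 -> clopen K -> K `&` X !=set0 ->
  exists K', [/\ clopen K', K' `&` X !=set0, K' `<=` K & ~ K' c].
Proof.
move=> zdT noiso [oK clK] [d [Kd Xd]].
have [p [Kp Xp pc]] : exists p, [/\ K p, X p & p <> c].
  have [dc|] := pselect (d = c); last by exists d.
  rewrite {}dc in Kd Xd; apply: contrapT => /forallNP noother.
  suff : isolated X c by rewrite noiso.
  split; first exact/mem_set.
  exists K; first exact: open_nbhs_nbhs.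
  apply/seteqP; split=> [y [Ky Xy]|_ ->] //.
  by apply: contrapT => yc; apply: (noother y).
have [U [clU Up Uc]] := zdT p c (introN eqP pc).
by exists (K `&` U); split=> //; [exact: clopenI|exists p|case].
Qed.

(* Baire-type argument: without isolated points, a decreasing sequence of clopen
   sets meeting X could avoid the n-th point of an enumeration of T at step n,
   yet by compactness the sets would still have a common point in X. *)
Lemma countable_compact_isolated (T : topologicalType) (X : set T) :
  compact [set: T] -> countable [set: T] -> zero_dimensional T ->
  closed X -> X !=set0 -> isolated X !=set0.
Proof.
move=> cptT cntT zdT clX [x0 Xx0]; apply/set0P/negP => /eqP noiso.
pose meets (K : set T) := clopen K /\ K `&` X !=set0.
have /countable_injP[h hinj] := cntT.
pose c n := xget x0 [set y | h y = n].
have c_h y : c (h y) = y.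
  by apply: xget_unique => // z hz; apply: hinj; rewrite ?in_setT.
have [next nextP] : exists next : set T -> nat -> set T, forall K n,
    meets K -> [/\ meets (next K n), next K n `<=` K & ~ next K n (c n)].
  have /choice[f fP] : forall Kn : set T * nat, exists K',
      meets Kn.1 -> [/\ meets K', K' `<=` Kn.1 & ~ K' (c Kn.2)].
    case=> K n /=; have [[clK KX]|] := pselect (meets K); last by exists K.
    have [K' [? ? ? ?]] := clopen_avoid (c n) zdT noiso clK KX.
    by exists K'.
  by exists (fun K n => f (K, n)) => K n; exact: (fP (K, n)).
pose K := fix K n := if n is m.+1 then next (K m) m else setT.
have K_meets n : meets (K n).
  elim: n => [|n IH] /=; last by case: (nextP _ n IH).
  by split; [exact: clopenT|exists x0].
have K_dec n m : (n <= m)%N -> K m `<=` K n.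
  move=> /subnK <-; elim: (m - n)%N => // k IH.
  have [_ sub _] := nextP _ (k + n)%N (K_meets (k + n)%N).
  exact: subset_trans sub IH.
pose F := filter_from [set: nat] (fun n => X `&` K n).
have FF : ProperFilter F.
  apply: filter_from_proper => [|n _]; last first.
    by case: (K_meets n) => _ [y []]; exists y.
  apply: filter_fromT_filter => [|i j]; first by exists 0%N.
  exists (maxn i j) => y [Xy Ky]; split; split=> //.
    exact: K_dec (leq_maxl i j) _ Ky.
  exact: K_dec (leq_maxr i j) _ Ky.
have [y [_ cly]] : [set: T] `&` cluster F !=set0 by apply: cptT; exact: filterT.
have : (X `&` K (h y).+1) y.
  have /closure_id -> : closed (X `&` K (h y).+1).
    by apply: closedI => //; case: (K_meets (h y).+1) => -[].
  by rewrite clusterE in cly; apply: cly; exists (h y).+1.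
case=> _ /=; case: (nextP _ (h y) (K_meets (h y))) => _ _.
by rewrite c_h.
Qed.

Lemma residually_finite_zero_dimensional (S : topologicalType)
    (mul : S -> S -> S) :
  residually_finite mul -> zero_dimensional S.
Proof.
move=> rfS x y /eqP xy; have [F [_ [phi [_ _ phi_open _ phixy]]]] := rfS x y xy.
exists (phi @^-1` [set phi x]); split=> //; last exact: nesym.
split; first exact: phi_open.
have -> : phi @^-1` [set phi x] = ~` \bigcup_(s in ~` [set phi x]) phi @^-1` [set s].
  apply/seteqP; split=> [z /= zx [s /= sx zs]|z /= nz].
    by apply: sx; rewrite -zs.
  by apply: contrapT => zx; apply: nz; exists (phi z).
by apply: open_closedC; apply: bigcup_open => s _; exact: phi_open.
Qed.

Lemma completely_regular_local_units (S : topologicalType) (mul : S -> S -> S) :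
  completely_regular mul -> exists e inv : S -> S, local_units mul e inv.
Proof.
move=> crS.
have /choice[f fP] : forall x, exists p : S * S,
    [/\ mul x p.1 = x, mul p.1 x = x, mul x p.2 = p.1 & mul p.2 x = p.1].
  move=> x; have [G [[_ [ex [_ exG invG]]] Gx]] := crS x.
  have [h [_ xh hx]] := invG x Gx; have [exx xex] := exG x Gx.
  by exists (ex, h).
by exists (fun x => (f x).1), (fun x => (f x).2).
Qed.

Section TopologicalSemigroup.
Variables (S : topologicalType) (mul : S -> S -> S).
Hypotheses (mul_cont : continuous (fun p : S * S => mul p.1 p.2))
  (cptS : compact [set: S]) (hausS : hausdorff_space S).

Local Notation leR := (leR mul).
Local Notation leL := (leL mul).
Local Notation H_class := (H_class mul).

Lemma continuous_mull t : continuous (mul t).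
Proof.
move=> z; have pair_cont : {for z, continuous (pair t)}.
  by apply: cvg_pair; [exact: cvg_cst|exact: cvg_id].
exact: (continuous_comp pair_cont (@mul_cont (t, z))).
Qed.

Lemma continuous_mulr t : continuous (mul^~ t).
Proof.
move=> z; have pair_cont : {for z, continuous (pair^~ t)}.
  by apply: cvg_pair; [exact: cvg_id|exact: cvg_cst].
exact: (continuous_comp pair_cont (@mul_cont (z, t))).
Qed.

Lemma closed_range (f : S -> S) : continuous f -> closed (range f).
Proof.
move=> f_cont; apply: compact_closed hausS _.
by apply: continuous_compact cptS; exact: continuous_subspaceT.
Qed.

Lemma closed_image_mul_fiber (f : S * S -> S) t :
  continuous f -> closed (f @` [set p | mul p.1 p.2 = t]).
Proof.
move=> f_cont; apply: compact_closed hausS _; apply: continuous_compact.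
  exact: continuous_subspaceT.
have fiber_closed : closed [set p : S * S | mul p.1 p.2 = t].
  apply: (@preimage_closed _ _ (fun p : S * S => mul p.1 p.2) [set t]).
  - by move=> p _; exact: mul_cont.
  - exact: accessible_closed_set1 (hausdorff_accessible hausS) t.
by apply: subclosed_compact fiber_closed (compact_setX cptS cptS) _.
Qed.

Lemma closed_H_class t : closed (H_class t).
Proof.
pose fiber := [set p : S * S | mul p.1 p.2 = t].
have below_R : [set y | leR y t] = range (mul t).
  by apply/seteqP; split=> y [v]; [move=> ->; exists v|move=> _ <-; exists v].
have below_L : [set y | leL y t] = range (mul^~ t).
  by apply/seteqP; split=> y [u]; [move=> ->; exists u|move=> _ <-; exists u].
have above_R : [set y | leR t y] = fst @` fiber.
  apply/seteqP; split=> y; first by case=> v tE; exists (y, v) => //=; exact: esym.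
  by case=> -[a v] /= <- <-; exists v.
have above_L : [set y | leL t y] = snd @` fiber.
  apply/seteqP; split=> y; first by case=> u tE; exists (u, y) => //=; exact: esym.
  by case=> -[u a] /= <- <-; exists u.
have -> : H_class t = [set y | leR y t] `&` [set y | leR t y] `&`
    [set y | leL y t] `&` [set y | leL t y].
  by apply/seteqP; split=> y; [case=> *|case=> -[[? ?] ?] ?].
rewrite below_R below_L above_R above_L.
apply: closedI; last by apply: closed_image_mul_fiber => p; exact: cvg_snd.
apply: closedI; last exact/closed_range/continuous_mulr.
apply: closedI; first exact/closed_range/continuous_mull.
by apply: closed_image_mul_fiber => p; exact: cvg_fst.
Qed.

End TopologicalSemigroup.

Section CompactCompletelyRegular.
Variables (S : topologicalType) (mul : S -> S -> S) (e inv : S -> S).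
Hypotheses (mulA : associative mul) (units : local_units mul e inv)
  (mul_cont : continuous (fun p : S * S => mul p.1 p.2))
  (cptS : compact [set: S]) (hausS : hausdorff_space S).

Local Notation H_class := (H_class mul).

Lemma isolated_H_class t y0 y :
  isolated (H_class t) y0 -> H_class t y -> isolated (H_class t) y.
Proof.
move=> [/set_mem Hy0 [V y0V VH]] Hy; split; first exact/mem_set.
have transl_y := H_transl_id mulA units Hy0 Hy.
exists (mul (mul y0 (inv y)) @^-1` V).
  by apply: (continuous_mull mul_cont); rewrite transl_y.
apply/seteqP; split=> [z [/= Vz Hz]|_ ->]; last first.
  by split=> //; rewrite /= transl_y; exact: nbhs_singleton.
apply: (H_transl_inj mulA units Hy0 Hy Hz).
have : (V `&` H_class t) (mul (mul y0 (inv y)) z).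
  by split=> //; exact: (H_transl_H_class mulA units Hy0 Hy Hz).
by rewrite VH.
Qed.

Lemma finite_H_class t : countable [set: S] -> zero_dimensional S ->
  finite_set (H_class t).
Proof.
move=> cntS zdS; have clH := closed_H_class mul_cont cptS hausS (t := t).
have [y0 isoy0] := countable_compact_isolated cptS cntS zdS clH
  (ex_intro _ t (H_class_refl units t)).
apply: compact_isolated_finite; first exact: subclosed_compact clH cptS _.
by move=> y Hy; exact: isolated_H_class isoy0 Hy.
Qed.

End CompactCompletelyRegular.

Theorem corollary3p11 (S : topologicalType) (mul : S -> S -> S) :
  profinite_semigroup mul ->
  finitely_generated mul ->
  countable [set: S] ->
  completely_regular mul ->
  finite_set [set: S].
Proof.
move=> [[mulA mul_cont cptS hausS] rfS] [A [finA denseA]] cntS crS.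
have [e [inv units]] := completely_regular_local_units crS.
have zdS := residually_finite_zero_dimensional rfS.
have finH t : finite_set (H_class mul t).
  exact: (finite_H_class mulA units mul_cont cptS hausS t cntS zdS).
have fin_genA := finite_gen_subsemigroup mulA units finH finA.
have /closure_id clA := compact_closed hausS (finite_compact fin_genA).
by rewrite -denseA -clA.
Qed.
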